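(* Let $\mathbf{a}=(a_1,\dots,a_n)$ be positive integers with sum $a$, $m\ge1$, and $\mathbf{r}=(r_1,\dots,r_m)$, $\mathbf{s}=(s_1,\dots,s_m)$ sequences of nonnegative integers with sums $r$, $s$. Let $N = n +a(r+s)+m\sum_{1\le i<j\le n} a_i a_j+ \sum_{i=1}^m r_i s_i$ and $N^- = n +a(r+s)+m\sum_{1\le i<j\le n} a_i a_j$. Then \[ |\mathrm{SB}(\mathbf{a},\mathbf{r},\mathbf{s})| = |\mathrm{SB}^-(\mathbf{a},\mathbf{r},\mathbf{s})| \frac{N!}{(N^-)!}. \]
   Context: Let $A_i=a_1+\dots+a_i$, $A_0=0$. For nonnegative integers $p,q$, the $(\mathbf{a},p,q)$-staircase: rows $1,\dots,p$ contain columns $1,\dots,a+q$; for $1\le i\le n$ and $A_{i-1}<t\le A_i$, row $p+t$ contains columns $A_{i-1}+1,\dots,a+q$; then, for each $i$, the $a_i\times a_i$ square of rows $p+A_{i-1}+1,\dots,p+A_i$ and columns $A_{i-1}+1,\dots,A_i$ is merged into a single cell, the $i$th diagonal cell, regarded as lying in each of these rows and columns. The $(\mathbf{a},p,q)^-$-staircase is obtained by further removing the cells in rows $1,\dots,p$ and columns $a+1,\dots,a+q$. Taking pages = the $(\mathbf{a},r_i,s_i)$-staircases (resp. $(\mathbf{a},r_i,s_i)^-$-staircases), $1\le i\le m$, with the $j$th diagonal cells of all pages identified, an $(\mathbf{a},\mathbf{r},\mathbf{s})$-Selberg book (resp. $(\mathbf{a},\mathbf{r},\mathbf{s})^-$-Selberg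 book) is a filling of the resulting cells with $1,\dots,N$ (resp. $1,\dots,N^-$), each used once, such that every non-diagonal cell has entry larger than that of the diagonal cell in its row (if any) and smaller than that of the diagonal cell in its column (if any). $\mathrm{SB}(\mathbf{a},\mathbf{r},\mathbf{s})$, $\mathrm{SB}^-(\mathbf{a},\mathbf{r},\mathbf{s})$ denote these sets. *)

From mathcomp Require Import all_boot.
Unset Printing Implicit Defensive.

(* Everything is 0-based:
   rows/columns are indexed from 0, pages by 'I_m, diagonal cells by 'I_n,
   and the labels 1..N are represented by 'I_N = {0,..,N-1}
   (an order-preserving shift by one). *)

Definition Apre (n : nat) (a : 'I_n -> nat) (i : 'I_n) : nat :=
  \sum_(j < n | j < i) a j.

Arguments Apre {n} a i.

Definition atot (n : nat) (a : 'I_n -> nat) : nat := \sum_(j < n) a j.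

Arguments atot {n} a.

Definition inblock (n : nat) (a : 'I_n -> nat) (i : 'I_n) (t : nat) : bool :=
  (Apre a i <= t) && (t < Apre a i + a i).

Arguments inblock {n} a i t.

(* a bound large enough for all row/column indices *)
Definition Bnd (n : nat) (a : 'I_n -> nat) (m : nat) (r s : 'I_m -> nat) : nat :=
  atot a + \sum_(k < m) r k + \sum_(k < m) s k + 1.

Arguments Bnd {n} a {m} r s.

Definition Box (n : nat) (a : 'I_n -> nat) (m : nat) (r s : 'I_m -> nat) := ('I_m * 'I_(Bnd a r s) * 'I_(Bnd a r s))%type.

Arguments Box {n} a {m} r s.

(* Non-diagonal cell (k, x, y) of page k of the (a, r_k, s_k)-staircase
   (or of the (a, r_k, s_k)^- staircase when minus = true). *)
Definition cellpred (minus : bool) n (a : 'I_n -> nat) m (r s : 'I_m -> nat)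
    (c : Box a r s) : bool :=
  let k := c.1.1 in let x := val c.1.2 in let y := val c.2 in
  [&& x < r k + atot a, y < atot a + s k,
      (x < r k) || [exists i : 'I_n, inblock a i (x - r k) && (Apre a i + a i <= y)]
    & ~~ [&& minus, x < r k & atot a <= y]].

Arguments cellpred minus {n} a {m} r s c.

(* Cells of the book: the n shared diagonal cells, plus the non-diagonal
   cells of all pages. *)
Definition Cell (minus : bool) n (a : 'I_n -> nat) m (r s : 'I_m -> nat) :=
  ('I_n + {c : Box a r s | cellpred minus a r s c})%type.

Arguments Cell minus {n} a {m} r s.

Definition goodfill (minus : bool) n (a : 'I_n -> nat) m (r s : 'I_m -> nat) (N : nat)
    (f : {ffun Cell minus a r s -> 'I_N}) : bool :=
  injectiveb f && [forall v : 'I_N, exists c, f c == v] &&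
  [forall c : {c : Box a r s | cellpred minus a r s c},
     let k := (val c).1.1 in let x := val (val c).1.2 in let y := val (val c).2 in
     [forall i : 'I_n, ((r k <= x) && inblock a i (x - r k)) ==>
                        (f (inl i) < f (inr c))] &&
     [forall j : 'I_n, inblock a j y ==> (f (inr c) < f (inl j))]].

Arguments goodfill minus {n} a {m} r s {N} f.

Definition e2 (n : nat) (a : 'I_n -> nat) : nat :=
  \sum_(i < n) \sum_(j < n | i < j) a i * a j.

Arguments e2 {n} a.

Definition Nminus n (a : 'I_n -> nat) m (r s : 'I_m -> nat) : nat :=
  n + atot a * (\sum_(k < m) r k + \sum_(k < m) s k) + m * e2 a.

Arguments Nminus {n} a {m} r s.

Definition Nfull n (a : 'I_n -> nat) m (r s : 'I_m -> nat) : nat :=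
  Nminus a r s + \sum_(k < m) r k * s k.

Arguments Nfull {n} a {m} r s.

Definition SB n (a : 'I_n -> nat) m (r s : 'I_m -> nat) :=
  [set f : {ffun Cell false a r s -> 'I_(Nfull a r s)} | goodfill _ a r s f].

Definition SBminus n (a : 'I_n -> nat) m (r s : 'I_m -> nat) :=
  [set f : {ffun Cell true a r s -> 'I_(Nminus a r s)} | goodfill _ a r s f].

Arguments SB {n} a {m} r s.
Arguments SBminus {n} a {m} r s.

(* A Selberg book is a labelling of its cells by 1..N that increases along every
   constraint "diagonal cell < cell in its row" and "cell in its column < diagonal
   cell".  The cells of SB missing from SB^- (rows 1..r_k, columns a+1..a+s_k of
   page k, r_k s_k of them) lie in no row and no column of a diagonal cell, so they
   take part in no constraint.  Labelling one unconstrained cell means choosing its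
   label freely and relabelling the other cells order-preservingly by the remaining
   labels; removing all k = sum_k r_k s_k such cells therefore multiplies the count
   by the falling factorial N^_k = N! / (N - k)! = N! / (N^-)!. *)

From mathcomp Require Import all_boot zify.
Set Implicit Arguments. Unset Strict Implicit.

Definition labellings (T : finType) (e : rel T) (N : nat) : {set {ffun T -> 'I_N}} :=
  [set f : {ffun T -> 'I_N} | [&& injectiveb f, [forall v, exists x, f x == v]
                                & [forall x, forall y, e x y ==> (f x < f y)]]].

Lemma inj_surj_bij (T1 T2 : finType) (h : T1 -> T2) :
  injective h -> (forall y, exists x, h x = y) -> bijective h.
Proof.
move=> h_inj h_surj.
have codom_h y : y \in codom h by case: (h_surj y) => x <-; apply: codom_f.
exists (fun y => iinv (codom_h y)) => [x|y]; last by rewrite f_iinv.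
by apply: h_inj; rewrite f_iinv.
Qed.

Lemma card_labellings_le (T1 T2 : finType) (e1 : rel T1) (e2 : rel T2) N (h : T1 -> T2) :
  bijective h -> {mono h : x y / e1 x y >-> e2 x y} ->
  #|labellings e2 N| <= #|labellings e1 N|.
Proof.
case=> h' hK h'K h_mono.
pose pull (g : {ffun T2 -> 'I_N}) : {ffun T1 -> 'I_N} := [ffun x => g (h x)].
have pull_inj : injective pull.
  move=> g1 g2 /ffunP eq_pull; apply/ffunP => y.
  by have := eq_pull (h' y); rewrite !ffunE h'K.
rewrite -(card_imset _ pull_inj); apply: subset_leq_card.
apply/subsetP => _ /imsetP [g + ->].
rewrite !inE => /and3P [/injectiveP g_inj /forallP g_surj /forallP g_mono].
apply/and3P; split.
- by apply/injectiveP => x y; rewrite !ffunE => /g_inj; apply: (can_inj hK).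
- apply/forallP => v; case/existsP: (g_surj v) => y /eqP <-.
  by apply/existsP; exists (h' y); rewrite ffunE h'K.
- apply/forallP => x; apply/forallP => y; rewrite !ffunE -h_mono.
  exact: (forallP (g_mono (h x))).
Qed.

Lemma card_labellings_bij (T1 T2 : finType) (e1 : rel T1) (e2 : rel T2) N (h : T1 -> T2) :
  bijective h -> {mono h : x y / e1 x y >-> e2 x y} ->
  #|labellings e1 N| = #|labellings e2 N|.
Proof.
move=> h_bij h_mono; apply/eqP; rewrite eqn_leq (card_labellings_le N h_bij h_mono) andbT.
case: (h_bij) => h' hK h'K.
apply: (@card_labellings_le _ _ _ _ N h'); first by exists h.
by move=> x y; rewrite -h_mono !h'K.
Qed.

Lemma lift_ltn n (p : 'I_n.+1) (i j : 'I_n) : (lift p i < lift p j) = (i < j).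
Proof. by rewrite /= /bump; case: (leqP p i); case: (leqP p j); lia. Qed.

Section IsolatedElement.

Variables (T : finType) (e : rel T) (u : T) (N : nat).
Hypothesis u_isolated : forall x y, e x y -> (x != u) && (y != u).

Local Notation T' := {x : T | x != u}.
Local Notation e' := (relpre (val : T' -> T) e).

Lemma eq_or_val (x : T) : x = u \/ exists x' : T', x = val x'.
Proof. by case: (eqVneq x u) => [->|xu]; [left | right; exists (Sub x xu)]. Qed.

Definition insert_label (pg : 'I_N.+1 * {ffun T' -> 'I_N}) : {ffun T -> 'I_N.+1} :=
  [ffun x => oapp (fun x' => lift pg.1 (pg.2 x')) pg.1 (insub x)].

Lemma insert_label_isolated pg : insert_label pg u = pg.1.
Proof. by rewrite ffunE insubF ?eqxx. Qed.

Lemma insert_label_val pg (x' : T') : insert_label pg (val x') = lift pg.1 (pg.2 x').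
Proof. by rewrite ffunE valK. Qed.

Lemma insert_label_inj : injective insert_label.
Proof.
move=> [p1 g1] [p2 g2] eq_ins.
have eq_p : p1 = p2.
  by have := insert_label_isolated (p1, g1); rewrite eq_ins insert_label_isolated.
subst p2; congr (_, _); apply/ffunP => x'.
by apply: (@lift_inj _ p1); rewrite -!(insert_label_val (p1, _)) eq_ins.
Qed.

Lemma insert_label_labelling p g :
  g \in labellings e' N -> insert_label (p, g) \in labellings e N.+1.
Proof.
rewrite !inE => /and3P [/injectiveP g_inj /forallP g_surj /forallP g_mono].
apply/and3P; split.
- apply/injectiveP => x y.
  case: (eq_or_val x) => [->|[x' ->]]; case: (eq_or_val y) => [->|[y' ->]] //;
    rewrite ?insert_label_isolated ?insert_label_val /=.
  + by move=> eq_p; have := neq_lift p (g y'); rewrite -eq_p eqxx.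
  + by move=> eq_p; have := neq_lift p (g x'); rewrite eq_p eqxx.
  + by move/lift_inj/g_inj ->.
- apply/forallP => v; apply/existsP.
  have [<-|pv] := eqVneq p v; first by exists u; rewrite insert_label_isolated.
  case: (unlift_some pv) => k -> _; case/existsP: (g_surj k) => x' /eqP <-.
  by exists (val x'); rewrite insert_label_val.
- apply/forallP => x; apply/forallP => y; apply/implyP => exy.
  case/andP: (u_isolated exy) => xu yu.
  case: (eq_or_val x) => [eq_x|[x' eq_x]]; first by rewrite eq_x eqxx in xu.
  case: (eq_or_val y) => [eq_y|[y' eq_y]]; first by rewrite eq_y eqxx in yu.
  subst x y.
  by rewrite !insert_label_val lift_ltn; have := forallP (g_mono x') y'; rewrite /= exy.
Qed.

Lemma labelling_insert_label f : f \in labellings e N.+1 ->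
  exists2 g, g \in labellings e' N & f = insert_label (f u, g).
Proof.
rewrite inE => /and3P [/injectiveP f_inj /forallP f_surj /forallP f_mono].
have f_neq (x' : T') : f u != f (val x').
  by apply/eqP => /f_inj eq_u; have := valP x'; rewrite -eq_u eqxx.
pose g := [ffun x' => s2val (unlift_some (f_neq x'))].
have fE x' : f (val x') = lift (f u) (g x') by rewrite ffunE; case: unlift_some.
exists g; last first.
  by apply/ffunP => x; case: (eq_or_val x) => [->|[x' ->]];
    rewrite ?insert_label_isolated ?insert_label_val.
rewrite inE; apply/and3P; split.
- by apply/injectiveP => x' y' eq_g; apply/val_inj/f_inj; rewrite !fE eq_g.
- apply/forallP => v; case/existsP: (f_surj (lift (f u) v)) => x /eqP fx.
  case: (eq_or_val x) => [eq_x|[x' eq_x]].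
    by have := neq_lift (f u) v; rewrite -fx eq_x eqxx.
  by apply/existsP; exists x'; apply/eqP/(@lift_inj _ (f u)); rewrite -fE -eq_x.
- apply/forallP => x'; apply/forallP => y'; apply/implyP => exy.
  by rewrite -(lift_ltn (f u)) -!fE; apply: (implyP (forallP (f_mono _) _) exy).
Qed.

Lemma card_labellings_isolated :
  #|labellings e N.+1| = N.+1 * #|labellings e' N|.
Proof.
have -> : labellings e N.+1 = insert_label @: setX [set: 'I_N.+1] (labellings e' N).
  apply/setP => f; apply/idP/imsetP => [/labelling_insert_label [g g_lab eq_f]|].
    by exists (f u, g); rewrite // in_setX in_setT.
  case=> [[p g]]; rewrite in_setX /= => /andP [_ g_lab] ->.
  exact: insert_label_labelling.
by rewrite (card_imset _ insert_label_inj) cardsX cardsT card_ord.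
Qed.

End IsolatedElement.

Lemma card_labellings_isolated_set k (T : finType) (e : rel T) (U : {set T}) N :
  #|U| = k -> (forall x y, e x y -> (x \notin U) && (y \notin U)) ->
  #|labellings e (N + k)| =
  #|labellings (relpre (val : {x | x \notin U} -> T) e) N| * (N + k) ^_ k.
Proof.
elim: k T e U => [|k IH] T e U cardU U_isolated.
  rewrite addn0 ffactn0 muln1.
  have notin_U x : x \notin U by rewrite (cards0_eq cardU) inE.
  apply: (card_labellings_bij N (h := fun x => Sub x (notin_U x))) => //.
  apply: inj_surj_bij => [x y /(congr1 val) //|y].
  by exists (val y); apply: val_inj.
have [u uU] : exists u, u \in U by apply/set0Pn; rewrite -card_gt0 cardU.
have u_isolated x y : e x y -> (x != u) && (y != u).
  by case/U_isolated/andP => xU yU; apply/andP; split; [move: xU | move: yU];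
  apply: contraNneq => ->.
rewrite addnS (card_labellings_isolated (u := u)) //.
pose U1 := [set x : {x | x != u} | val x \in U].
rewrite (IH _ _ U1); first last.
- by move=> x y /U_isolated /andP [xU yU]; rewrite !inE xU yU.
- apply/succn_inj; rewrite -cardU (cardsD1 u U) uU add1n; congr _.+1.
  rewrite -(card_imset _ val_inj); apply: eq_card => x; rewrite !inE.
  apply/imsetP/andP => [[y + ->] | [xu xU]]; last by exists (Sub x xu); rewrite ?inE.
  by rewrite inE => yU; split; first exact: (valP y).
rewrite ffactSS mulnCA; congr (_ * _).
have notin_U (x : {x : {x | x != u} | x \notin U1}) : val (val x) \notin U.
  by have := valP x; rewrite inE.
apply: (card_labellings_bij N (h := fun x => Sub (val (val x)) (notin_U x))) => //.
apply: inj_surj_bij => [x y /(congr1 val) /= /val_inj /val_inj //|y].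
have yu : val y != u by apply: contraNneq (valP y) => ->.
have yU1 : (Sub (val y) yu : {x | x != u}) \notin U1 by rewrite inE; exact: (valP y).
by exists (Sub (Sub (val y) yu) yU1); apply: val_inj.
Qed.

Definition sb_rel minus n (a : 'I_n -> nat) m (r s : 'I_m -> nat) :
    rel (Cell minus a r s) := fun x y =>
  match x, y with
  | inl i, inr c => (r (val c).1.1 <= val (val c).1.2)
                    && inblock a i (val (val c).1.2 - r (val c).1.1)
  | inr c, inl j => inblock a j (val (val c).2)
  | _, _ => false
  end.

Arguments sb_rel minus {n} a {m} r s.

Section SelbergBook.

Variables (n : nat) (a : 'I_n -> nat) (m : nat) (r s : 'I_m -> nat).

Lemma goodfill_labellings minus N (f : {ffun Cell minus a r s -> 'I_N}) :
  goodfill minus a r s f = (f \in labellings (sb_rel minus a r s) N).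
Proof.
rewrite /goodfill inE -andbA; congr [&& _, _ & _]; apply/forallP/forallP => f_mono.
  move=> [i|c]; apply/forallP => [[j|d]] //=.
    by case/andP: (f_mono d) => /forallP /(_ i).
  by case/andP: (f_mono c) => _ /forallP /(_ j).
move=> c; apply/andP; split; apply/forallP => i.
  exact: (forallP (f_mono (inl i)) (inr c)).
exact: (forallP (f_mono (inr c)) (inl i)).
Qed.

Definition corner_box (c : Box a r s) : bool :=
  (val c.1.2 < r c.1.1) && (atot a <= val c.2).

Definition corner : {set Cell false a r s} :=
  [set x | if x is inr c then corner_box (val c) else false].

Lemma cellpred_minus c :
  cellpred true a r s c = cellpred false a r s c && ~~ corner_box c.
Proof. by rewrite /cellpred /corner_box /= !andbA andbT. Qed.

Lemma Apre_add_le_atot j : Apre a j + a j <= atot a.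
Proof.
rewrite /atot (bigID (fun i : 'I_n => i < j)) /= leq_add2l.
by rewrite (bigD1 j) ?ltnn //= leq_addr.
Qed.

Lemma corner_isolated x y :
  sb_rel false a r s x y -> (x \notin corner) && (y \notin corner).
Proof.
case: x => [i|c]; case: y => [j|d] //=; rewrite !inE /corner_box /=.
  by case/andP => r_le _; rewrite negb_and -leqNgt r_le.
rewrite /inblock => /andP [_ lt_y]; rewrite andbT negb_and; apply/orP; right.
by rewrite -ltnNge (leq_trans lt_y (Apre_add_le_atot j)).
Qed.

Lemma sum_ord_range B lo hi : lo <= hi ->
  \sum_(y < B) ((lo <= y) && (y < hi)) = minn B hi - minn B lo.
Proof.
move=> lo_hi; elim: B => [|B IH]; first by rewrite big_ord0 !min0n.
by rewrite big_ord_recr /= IH; case: (leqP lo B); case: (ltnP B hi); lia.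
Qed.

Lemma card_corner_boxes :
  #|[set c : Box a r s | corner_box c && (val c.2 < atot a + s c.1.1)]|
  = \sum_(k < m) r k * s k.
Proof.
rewrite -sum1_card big_mkcond /=.
set B := Bnd a r s.
have r_le_B k : r k <= B by rewrite /B /Bnd (bigD1 k) //=; lia.
have s_le_B k : atot a + s k <= B.
  by rewrite /B /Bnd [X in _ + _ + X + _](bigD1 k) //=; lia.
transitivity (\sum_(k < m) \sum_(x < B) \sum_(y < B)
   ((x < r k) * ((atot a <= y) && (y < atot a + s k)))).
  rewrite (pair_bigA _ (fun (k : 'I_m) (x : 'I_B) => \sum_(y < B)
   ((x < r k) * ((atot a <= y) && (y < atot a + s k))))).
  rewrite (pair_bigA _ (fun (kx : 'I_m * 'I_B) (y : 'I_B) =>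
   ((kx.2 < r kx.1) * ((atot a <= y) && (y < atot a + s kx.1))))).
  apply: eq_bigr => [[[k x] y]] _; rewrite inE /corner_box /=.
  by case: (x < r k); case: (atot a <= y); case: (y < _).
apply: eq_bigr => k _; under eq_bigr do rewrite -big_distrr /=.
rewrite -big_distrl /= sum_ord_range ?leq_addr //.
have -> : \sum_(x < B) (x < r k) = \sum_(x < B) ((0 <= x) && (x < r k)) by [].
rewrite sum_ord_range //; congr (_ * _).
  by have := r_le_B k; lia.
by have := s_le_B k; lia.
Qed.

Lemma card_corner : #|corner| = \sum_(k < m) r k * s k.
Proof.
pose corner_cells := [set c : {c | cellpred false a r s c} | corner_box (val c)].
have -> : corner = inr @: corner_cells.
  apply/setP => [[i|c]]; rewrite !inE /=; first by apply/esym/imsetP => [[]].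
  by apply/idP/imsetP => [c_corner|[c' + [->]]]; [exists c; rewrite ?inE | rewrite inE].
rewrite (card_imset _ (@inr_inj _ _)) -card_corner_boxes.
rewrite -(card_imset corner_cells val_inj); apply: eq_card => c; rewrite inE.
apply/imsetP/idP => [[c' + ->]|].
  by rewrite inE => ->; case/and4P: (valP c').
rewrite /corner_box => /andP [/andP [c_top c_right] c_bot].
have c_cell : cellpred false a r s c.
  by rewrite /cellpred c_top c_bot /= (leq_trans c_top (leq_addr _ _)).
by exists (Sub c c_cell); rewrite // inE /= /corner_box c_top.
Qed.

Lemma cellpred_minus_full c : cellpred true a r s c -> cellpred false a r s c.
Proof. by rewrite cellpred_minus => /andP []. Qed.

Definition full_cell (c : {c | cellpred true a r s c}) : {c | cellpred false a r s c} :=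
  Sub (val c) (cellpred_minus_full (valP c)).

Lemma full_cell_notin_corner c : (inr (full_cell c) : Cell false a r s) \notin corner.
Proof. by rewrite inE /=; have := valP c; rewrite cellpred_minus => /andP []. Qed.

Lemma inl_notin_corner i : (inl i : Cell false a r s) \notin corner.
Proof. by rewrite inE. Qed.

Definition minus_to_full (x : Cell true a r s) : {x : Cell false a r s | x \notin corner} :=
  match x with
  | inl i => Sub (inl i) (inl_notin_corner i)
  | inr c => Sub (inr (full_cell c)) (full_cell_notin_corner c)
  end.

Lemma minus_to_full_bij : bijective minus_to_full.
Proof.
apply: inj_surj_bij => [[i|c] [j|d] /(congr1 val) //= [] // eq_cd|[[i|c] c_out]].
- by rewrite eq_cd.
- by congr inr; apply: val_inj.
- by exists (inl i); apply: val_inj.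
have c_minus : cellpred true a r s (val c).
  by rewrite cellpred_minus (valP c); move: c_out; rewrite inE.
by exists (inr (Sub (val c) c_minus)); apply/val_inj/(congr1 inr)/val_inj.
Qed.

Lemma minus_to_full_mono :
  {mono minus_to_full : x y / sb_rel true a r s x y >-> relpre val (sb_rel false a r s) x y}.
Proof. by move=> [i|c] [j|d]. Qed.

End SelbergBook.

Arguments corner {n} a {m} r s.

Theorem proposition5p2 (n : nat) (a : 'I_n -> nat) (m : nat) (r s : 'I_m -> nat) :
  (forall i, 0 < a i) -> 0 < m ->
  #|SB a r s| = #|SBminus a r s| * ((Nfull a r s)`! %/ (Nminus a r s)`!).
Proof.
move=> _ _.
have -> : #|SB a r s| = #|labellings (sb_rel false a r s) (Nfull a r s)|.
  by apply: eq_card => f; rewrite inE goodfill_labellings.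
have -> : #|SBminus a r s| = #|labellings (sb_rel true a r s) (Nminus a r s)|.
  by apply: eq_card => f; rewrite inE goodfill_labellings.
rewrite /Nfull -(card_corner a r s).
rewrite (card_labellings_isolated_set _ _ (@corner_isolated _ _ _ _ _)) //.
rewrite ffact_factd ?leq_addl // addnK; congr (_ * _).
exact/esym/(card_labellings_bij _ (minus_to_full_bij a r s))/minus_to_full_mono.
Qed.
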